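(* Let $R$ be one of the chain rings $\mathbb{G}_4=\mathbb{Z}_4[X]/(X^2+X+1)$, $\mathbb{S}_4=\mathbb{F}_4[X]/(X^2)$, $\mathbb{T}_4=\mathbb{F}_4[X;a\mapsto a^2]/(X^2)$. Then there exists a projective $(201,13)$-arc in $\mathrm{PHG}(2,R)$.
   Context: $\mathbb{F}_4[X;a\mapsto a^2]$ denotes the skew polynomial ring with commutation rule $Xa=a^2X$. For a finite chain ring $R$ of length $2$ with residue field $\mathbb{F}_q$, the projective Hjelmslev plane $\mathrm{PHG}(2,R)$ is the incidence structure whose points are the free rank-$1$ submodules of the right module $R_R^3$, whose lines are the free rank-$2$ submodules of $R_R^3$, with incidence given by inclusion. A projective $(k,n)$-arc is a set of $k$ points meeting every line in at most $n$ points. *)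

From HB Require Import structures.
From mathcomp Require Import all_boot all_order all_algebra ring.
Set Implicit Arguments. Unset Strict Implicit. Unset Printing Implicit Defensive.
Import GRing.Theory.
Local Open Scope ring_scope.

(* The field F_4 = F_2[w]/(w^2+w+1), element a + b w encoded as (a,b). *)
Inductive F4 := MkF4 of bool * bool.
Definition f4val (x : F4) := let: MkF4 p := x in p.
HB.instance Definition _ := [isNew for f4val].
HB.instance Definition _ := [Finite of F4 by <:].

Definition f40 := MkF4 (false, false).
Definition f41 := MkF4 (true, false).
Definition f4add (x y : F4) :=
  let: MkF4 (a, b) := x in let: MkF4 (c, d) := y in MkF4 (addb a c, addb b d).
Definition f4opp (x : F4) := x.
(* (a + b w)(c + d w) = (ac + bd) + (ad + bc + bd) w *)
Definition f4mul (x y : F4) :=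
  let: MkF4 (a, b) := x in let: MkF4 (c, d) := y in
  MkF4 (addb (a && c) (b && d), addb (addb (a && d) (b && c)) (b && d)).

Lemma f4addA : associative f4add.
Proof. by move=> [[[] []]] [[[] []]] [[[] []]]. Qed.
Lemma f4addC : commutative f4add.
Proof. by move=> [[[] []]] [[[] []]]. Qed.
Lemma f4add0 : left_id f40 f4add.
Proof. by move=> [[[] []]]. Qed.
Lemma f4addN : left_inverse f40 f4opp f4add.
Proof. by move=> [[[] []]]. Qed.
Lemma f4mulA : associative f4mul.
Proof. by move=> [[[] []]] [[[] []]] [[[] []]]. Qed.
Lemma f4mulC : commutative f4mul.
Proof. by move=> [[[] []]] [[[] []]]. Qed.
Lemma f4mul1 : left_id f41 f4mul.
Proof. by move=> [[[] []]]. Qed.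
Lemma f4mulDl : left_distributive f4mul f4add.
Proof. by move=> [[[] []]] [[[] []]] [[[] []]]. Qed.
Lemma f4one_neq0 : f41 != f40. Proof. by []. Qed.

HB.instance Definition _ := GRing.isZmodule.Build F4 f4addA f4addC f4add0 f4addN.
HB.instance Definition _ := GRing.Zmodule_isComNzRing.Build F4
  f4mulA f4mulC f4mul1 f4mulDl f4one_neq0.

Definition f4frob (x : F4) : F4 := x ^+ 2.

(* S_4 = F_4[X]/(X^2): element a + b t (t = class of X), t^2 = 0.      *)
Inductive S4 := MkS4 of F4 * F4.
Definition s4val (x : S4) := let: MkS4 p := x in p.
HB.instance Definition _ := [isNew for s4val].
HB.instance Definition _ := [Finite of S4 by <:].

Definition s4zero := MkS4 (0, 0).
Definition s4one := MkS4 (1, 0).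
Definition s4add (x y : S4) :=
  let: MkS4 (a, b) := x in let: MkS4 (c, d) := y in MkS4 (a + c, b + d).
Definition s4opp (x : S4) := let: MkS4 (a, b) := x in MkS4 (- a, - b).
Definition s4mul (x y : S4) :=
  let: MkS4 (a, b) := x in let: MkS4 (c, d) := y in MkS4 (a * c, a * d + b * c).

Lemma s4addA : associative s4add.
Proof. by move=> [[a b]] [[c d]] [[e f]]; congr (MkS4 (_, _)); ring. Qed.
Lemma s4addC : commutative s4add.
Proof. by move=> [[a b]] [[c d]]; congr (MkS4 (_, _)); ring. Qed.
Lemma s4add0 : left_id s4zero s4add.
Proof. by move=> [[a b]]; congr (MkS4 (_, _)); ring. Qed.
Lemma s4addN : left_inverse s4zero s4opp s4add.
Proof. by move=> [[a b]]; congr (MkS4 (_, _)); ring. Qed.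
Lemma s4mulA : associative s4mul.
Proof. by move=> [[a b]] [[c d]] [[e f]]; congr (MkS4 (_, _)); ring. Qed.
Lemma s4mul1 : left_id s4one s4mul.
Proof. by move=> [[a b]]; congr (MkS4 (_, _)); ring. Qed.
Lemma s4mulr1 : right_id s4one s4mul.
Proof. by move=> [[a b]]; congr (MkS4 (_, _)); ring. Qed.
Lemma s4mulDl : left_distributive s4mul s4add.
Proof. by move=> [[a b]] [[c d]] [[e f]]; congr (MkS4 (_, _)); ring. Qed.
Lemma s4mulDr : right_distributive s4mul s4add.
Proof. by move=> [[a b]] [[c d]] [[e f]]; congr (MkS4 (_, _)); ring. Qed.
Lemma s4one_neq0 : s4one != s4zero. Proof. by []. Qed.

HB.instance Definition _ := GRing.isNzRing.Build S4 s4addA s4addC s4add0 s4addN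
  s4mulA s4mul1 s4mulr1 s4mulDl s4mulDr s4one_neq0.

(* T_4 = F_4[X; a |-> a^2]/(X^2): element a + b t, with t c = c^2 t,   *)
(* t^2 = 0.  (a + b t)(c + d t) = ac + (ad + b c^2) t.                  *)
Inductive T4 := MkT4 of F4 * F4.
Definition t4val (x : T4) := let: MkT4 p := x in p.
HB.instance Definition _ := [isNew for t4val].
HB.instance Definition _ := [Finite of T4 by <:].

Definition t4zero := MkT4 (0, 0).
Definition t4one := MkT4 (1, 0).
Definition t4add (x y : T4) :=
  let: MkT4 (a, b) := x in let: MkT4 (c, d) := y in MkT4 (a + c, b + d).
Definition t4opp (x : T4) := let: MkT4 (a, b) := x in MkT4 (- a, - b).
Definition t4mul (x y : T4) :=
  let: MkT4 (a, b) := x in let: MkT4 (c, d) := y in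
  MkT4 (a * c, a * d + b * f4frob c).

Lemma f4frobD (x y : F4) : f4frob (x + y) = f4frob x + f4frob y.
Proof. by move: x y => [[[] []]] [[[] []]]. Qed.
Lemma f4frobM (x y : F4) : f4frob (x * y) = f4frob x * f4frob y.
Proof. by rewrite /f4frob exprMn. Qed.
Lemma f4frob1 : f4frob 1 = 1.
Proof. by rewrite /f4frob expr1n. Qed.

Lemma t4addA : associative t4add.
Proof. by move=> [[a b]] [[c d]] [[e f]]; congr (MkT4 (_, _)); ring. Qed.
Lemma t4addC : commutative t4add.
Proof. by move=> [[a b]] [[c d]]; congr (MkT4 (_, _)); ring. Qed.
Lemma t4add0 : left_id t4zero t4add.
Proof. by move=> [[a b]]; congr (MkT4 (_, _)); ring. Qed.
Lemma t4addN : left_inverse t4zero t4opp t4add.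
Proof. by move=> [[a b]]; congr (MkT4 (_, _)); ring. Qed.
Lemma t4mulA : associative t4mul.
Proof.
by move=> [[a b]] [[c d]] [[e f]]; rewrite /t4mul f4frobM;
  congr (MkT4 (_, _)); ring.
Qed.
Lemma t4mul1 : left_id t4one t4mul.
Proof. by move=> [[a b]]; congr (MkT4 (_, _)); ring. Qed.
Lemma t4mulr1 : right_id t4one t4mul.
Proof.
move=> [[a b]]; congr (MkT4 (_, _)); first by rewrite mulr1.
by move: a b => [[[] []]] [[[] []]].
Qed.
Lemma t4mulDl : left_distributive t4mul t4add.
Proof. by move=> [[a b]] [[c d]] [[e f]]; congr (MkT4 (_, _)); ring. Qed.
Lemma t4mulDr : right_distributive t4mul t4add.
Proof.
by move=> [[a b]] [[c d]] [[e f]]; rewrite /t4mul /t4add f4frobD;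
  congr (MkT4 (_, _)); ring.
Qed.
Lemma t4one_neq0 : t4one != t4zero. Proof. by []. Qed.

HB.instance Definition _ := GRing.isNzRing.Build T4 t4addA t4addC t4add0 t4addN
  t4mulA t4mul1 t4mulr1 t4mulDl t4mulDr t4one_neq0.

(* G_4 = Z_4[X]/(X^2+X+1) (Galois ring GR(16,4)): element a + b x with *)
(* a, b in Z/4Z and x^2 = -1 - x.                                      *)
Inductive G4 := MkG4 of 'Z_4 * 'Z_4.
Definition g4val (x : G4) := let: MkG4 p := x in p.
HB.instance Definition _ := [isNew for g4val].
HB.instance Definition _ := [Finite of G4 by <:].

Definition g4zero := MkG4 (0, 0).
Definition g4one := MkG4 (1, 0).
Definition g4add (x y : G4) :=
  MkG4 ((g4val x).1 + (g4val y).1, (g4val x).2 + (g4val y).2).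
Definition g4opp (x : G4) := MkG4 (- (g4val x).1, - (g4val x).2).
Definition g4mul (x y : G4) :=
  let: MkG4 (a, b) := x in let: MkG4 (c, d) := y in
  MkG4 (a * c - b * d, a * d + b * c - b * d).

Lemma g4addA : associative g4add.
Proof. by move=> [[a b]] [[c d]] [[e f]]; congr (MkG4 (_, _)); rewrite /= addrA. Qed.
Lemma g4addC : commutative g4add.
Proof. by move=> [[a b]] [[c d]]; congr (MkG4 (_, _)); rewrite /= addrC. Qed.
Lemma g4add0 : left_id g4zero g4add.
Proof. by move=> [[a b]]; congr (MkG4 (_, _)); rewrite /= add0r. Qed.
Lemma g4addN : left_inverse g4zero g4opp g4add.
Proof. by move=> [[a b]]; congr (MkG4 (_, _)); rewrite /= addNr. Qed.
Lemma g4mulA : associative g4mul.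
Proof. move=> [[a b]] [[c d]] [[e f]]; rewrite /g4mul /=; congr (MkG4 (_, _)); ring. Qed.
Lemma g4mul1 : left_id g4one g4mul.
Proof. move=> [[a b]]; rewrite /g4mul /=; congr (MkG4 (_, _)); ring. Qed.
Lemma g4mulr1 : right_id g4one g4mul.
Proof. move=> [[a b]]; rewrite /g4mul /=; congr (MkG4 (_, _)); ring. Qed.
Lemma g4mulDl : left_distributive g4mul g4add.
Proof. move=> [[a b]] [[c d]] [[e f]]; rewrite /g4mul /g4add /=; congr (MkG4 (_, _)); ring. Qed.
Lemma g4mulDr : right_distributive g4mul g4add.
Proof. move=> [[a b]] [[c d]] [[e f]]; rewrite /g4mul /g4add /=; congr (MkG4 (_, _)); ring. Qed.
Lemma g4one_neq0 : g4one != g4zero. Proof. by []. Qed.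

HB.instance Definition _ := GRing.isNzRing.Build G4 g4addA g4addC g4add0 g4addN
  g4mulA g4mul1 g4mulr1 g4mulDl g4mulDr g4one_neq0.

(* Vectors of R^3 are row vectors 'rV[R]_3; R^3 is a RIGHT R-module.   *)

Section PHG.
Variable R : finNzRingType.

Definition rscale (v : 'rV[R]_3) (r : R) : 'rV[R]_3 := \row_j (v 0 j * r).

Definition rcomb (k : nat) (B : 'I_k -> 'rV[R]_3) (c : {ffun 'I_k -> R}) : 'rV[R]_3 :=
  \sum_(i < k) rscale (B i) (c i).

Definition free_submodule (k : nat) (S : {set 'rV[R]_3}) : Prop :=
  exists B : 'I_k -> 'rV[R]_3,
    S = [set rcomb B c | c : {ffun 'I_k -> R}] /\ injective (rcomb B).

Definition phg_point (P : {set 'rV[R]_3}) : Prop := free_submodule 1 P.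
Definition phg_line (L : {set 'rV[R]_3}) : Prop := free_submodule 2 L.

Definition proj_arc (k n : nat) (A : {set {set 'rV[R]_3}}) : Prop :=
  [/\ forall P, P \in A -> phg_point P,
      #|A| = k &
      forall L, phg_line L -> #|[set P in A | P \subset L]| <= n]%N.
End PHG.

(** The arcs are given explicitly, each point of PHG(2,R) by a vector having a
    coordinate equal to 1.  Two vectors [v], [w] with [v_j = 1] such that
    [w_k - v_k w_j] is left invertible for some [k] form a free pair, and a free
    rank-2 submodule containing a free pair is spanned by it, both spans having
    [|R|^2] elements.  So a line through an arc point [v] either contains no arc
    point forming such a pair with [v], or it is spanned by [v] and such a point
    [w] and thus lies in the kernel of every linear form vanishing at [v] and [w].
    The rest is computation: for each arc point [v] at most 13 arc points do not
    form such a pair with [v], every such pair lies on the kernel of a listed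
    form, and each listed form vanishes at at most 13 arc points. *)

From HB Require Import structures.
From mathcomp Require Import all_boot all_order all_algebra.
Set Implicit Arguments. Unset Strict Implicit. Unset Printing Implicit Defensive.
Import GRing.Theory.
Local Open Scope ring_scope.

Section Geometry.
Variable R : finNzRingType.
Local Notation vec := 'rV[R]_3.

Definition rspan k (B : 'I_k -> vec) : {set vec} := [set rcomb B c | c : {ffun 'I_k -> R}].
Definition point_of (x : vec) : {set vec} := rspan (fun _ : 'I_1 => x).
Definition pair2 (x y : vec) (i : 'I_2) : vec := if i == ord0 then x else y.
Definition lform (l x : vec) : R := \sum_j l 0 j * x 0 j.

Lemma rcombE k (B : 'I_k -> vec) c j : rcomb B c 0 j = \sum_i B i 0 j * c i.
Proof. by rewrite /rcomb summxE; apply: eq_bigr => i _; rewrite mxE. Qed.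

Lemma rcombB k (B : 'I_k -> vec) c d : rcomb B (c - d) = rcomb B c - rcomb B d.
Proof.
apply/rowP => j; rewrite !mxE !rcombE -sumrB.
by apply: eq_bigr => i _; rewrite !ffunE mulrBr.
Qed.

Lemma rcomb_inj k (B : 'I_k -> vec) :
  (forall c, rcomb B c = 0 -> c = 0) -> injective (rcomb B).
Proof.
move=> ker0 c d /eqP; rewrite -subr_eq0 -rcombB => /eqP/ker0/eqP.
by rewrite subr_eq0 => /eqP.
Qed.

Lemma rcomb_rspan k m (B : 'I_k -> vec) (C : 'I_m -> vec) c :
  (forall i, C i \in rspan B) -> rcomb C c \in rspan B.
Proof.
move=> CB; have /fin_all_exists [d dP] : forall i, exists d, C i = rcomb B d.
  by move=> i; have /imsetP [d _ ->] := CB i; exists d.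
apply/imsetP; exists [ffun l => \sum_i d i l * c i] => //.
apply/rowP => j; rewrite !rcombE; under eq_bigr => i _ do rewrite dP rcombE mulr_suml.
rewrite exchange_big; apply: eq_bigr => l _; rewrite ffunE mulr_sumr.
by apply: eq_bigr => i _; rewrite mulrA.
Qed.

Lemma card_rspan k (B : 'I_k -> vec) :
  injective (rcomb B) -> #|rspan B| = (#|R| ^ k)%N.
Proof. by move=> injB; rewrite card_imset // card_ffun card_ord. Qed.

Lemma rspan_free_eq k (B C : 'I_k -> vec) :
  injective (rcomb B) -> injective (rcomb C) ->
  (forall i, C i \in rspan B) -> rspan C = rspan B.
Proof.
move=> injB injC CB; apply/setP/subset_cardP; first by rewrite !card_rspan.
by apply/subsetP => _ /imsetP [c _ ->]; apply: rcomb_rspan.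
Qed.

Lemma lform_rcomb k l (B : 'I_k -> vec) c :
  lform l (rcomb B c) = \sum_i lform l (B i) * c i.
Proof.
rewrite /lform; under eq_bigr => j _ do rewrite rcombE mulr_sumr.
rewrite exchange_big; apply: eq_bigr => i _; rewrite mulr_suml.
by apply: eq_bigr => j _; rewrite mulrA.
Qed.

Lemma lform_rspan k l (B : 'I_k -> vec) x :
  (forall i, lform l (B i) = 0) -> x \in rspan B -> lform l x = 0.
Proof.
move=> lB /imsetP [c _ ->]; rewrite lform_rcomb.
by apply: big1 => i _; rewrite lB mul0r.
Qed.

Lemma point_ofP (x y : vec) : reflect (exists c, y = rscale x c) (y \in point_of x).
Proof.
apply: (iffP imsetP) => [[c _ ->] | [a ->]].
  by exists (c ord0); apply/rowP => j; rewrite rcombE big_ord1 mxE.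
by exists [ffun => a] => //; apply/rowP => j; rewrite rcombE big_ord1 !mxE ffunE.
Qed.

Lemma point_of_self (x : vec) : x \in point_of x.
Proof. by apply/point_ofP; exists 1; apply/rowP => j; rewrite mxE mulr1. Qed.

Lemma point_free (j : 'I_3) (x : vec) :
  x 0 j = 1 -> injective (rcomb (fun _ : 'I_1 => x)).
Proof.
move=> xj1; apply: rcomb_inj => c /rowP /(_ j); rewrite rcombE big_ord1 xj1 mul1r mxE.
by move=> c0; apply/ffunP => i; rewrite ord1 c0 ffunE.
Qed.

Lemma rcomb_pair2E (x y : vec) c j :
  rcomb (pair2 x y) c 0 j = x 0 j * c ord0 + y 0 j * c ord_max.
Proof.
rewrite rcombE big_ord_recl big_ord1 /pair2 /=.
by congr (_ + _ * c _); apply: val_inj.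
Qed.

Lemma pair2_free (j k : 'I_3) (x y : vec) :
  x 0 j = 1 -> (exists z, z * (y 0 k - x 0 k * y 0 j) = 1) ->
  injective (rcomb (pair2 x y)).
Proof.
move=> xj1 [z zu]; apply: rcomb_inj => c c0.
have cj := congr1 (fun v : vec => v 0 j) c0; have ck := congr1 (fun v : vec => v 0 k) c0.
rewrite /= !rcomb_pair2E !mxE in cj ck; rewrite xj1 mul1r in cj.
have c0E : c ord0 = - (y 0 j * c ord_max) by apply/eqP; rewrite -addr_eq0 cj.
(* [(y_k - x_k y_j) c_1 = x_k c_0 + y_k c_1 = 0] since [c_0 = - y_j c_1]. *)
have c1E : c ord_max = 0.
  rewrite -[c _]mul1r -zu -mulrA mulrBl -mulrA -mulrN -c0E.
  by rewrite addrC ck mulr0.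
apply/ffunP => i; rewrite ffunE; have [->|->] : i = ord0 \/ i = ord_max.
- by case: i => -[|[|//]] ?; [left | right]; apply: val_inj.
- by rewrite c0E c1E mulr0 oppr0.
- exact: c1E.
Qed.

Lemma pair2_free_notin_point (x y : vec) :
  injective (rcomb (pair2 x y)) -> x \notin point_of y.
Proof.
move=> inj; apply/point_ofP => -[a xE].
pose c : {ffun 'I_2 -> R} := [ffun i => if i == ord0 then 1 else - a].
have /(congr1 (fun c : {ffun 'I_2 -> R} => c ord0)) : c = 0.
  apply: inj; apply/rowP => j; rewrite rcomb_pair2E !ffunE xE !mxE /=.
  by rewrite mulr1 mulrN addrN rcombE big1 // => i _; rewrite ffunE mulr0.
by rewrite !ffunE /=; apply/eqP; rewrite oner_eq0.
Qed.

Section ArcFromForms.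
Variables (pts forms : seq vec) (indep : rel vec) (n : nat).
Hypotheses
  (pts_uniq : uniq pts)
  (pts_unit : {in pts, forall v : vec, exists j, v 0 j = 1})
  (pts_distinct : {in pts &, forall v w, v != w -> v \notin point_of w})
  (indep_free : {in pts &, forall v w, indep v w -> injective (rcomb (pair2 v w))})
  (dependent_le : {in pts, forall v, (count (predC (indep v)) pts <= n)%N})
  (forms_cover : {in pts &, forall v w, indep v w ->
                   exists2 l, l \in forms & lform l v = 0 /\ lform l w = 0})
  (forms_le : {in forms, forall l, (count (fun v => lform l v == 0%R) pts <= n)%N}).

Lemma count_line_le (L : {set vec}) :
  phg_line L -> (count (fun x => x \in L) pts <= n)%N.
Proof.
case=> B [{L}-> injB]; rewrite -/(rspan B); set L := rspan B.
have [/hasP [v vpts vL] | ] := boolP (has (fun x => x \in L) pts); last first.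
  by rewrite has_count -leqNgt leqn0 => /eqP ->.
have [/hasP [w wpts /andP [wL vw]] | /hasPn Lindep] :=
  boolP (has (fun w => (w \in L) && indep v w) pts); last first.
  rewrite (eq_in_count (a2 := fun x => (x \in L) && ~~ indep v x)).
    by apply: leq_trans (dependent_le vpts); apply: sub_count => x /andP [].
  by move=> x /Lindep; case: (x \in L) => //= /negbTE ->.
have [l lforms [lv lw]] := forms_cover vpts wpts vw.
have LE : rspan (pair2 v w) = L.
  by apply: rspan_free_eq => // [|i]; [exact: indep_free | rewrite /pair2; case: ifP].
apply: leq_trans (forms_le lforms); apply: sub_count => x; rewrite /= -LE => xL.
by apply/eqP/(lform_rspan _ xL) => i; rewrite /pair2; case: ifP.
Qed.

Lemma points_on_line_le (L : {set vec}) :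
  (#|[set P in [set point_of v | v in pts] | P \subset L]|
     <= count (fun x => x \in L) pts)%N.
Proof.
rewrite -size_filter; apply: leq_trans (card_size _).
apply: leq_trans (leq_imset_card point_of _); apply: subset_leq_card.
apply/subsetP => P; rewrite !inE => /andP [/imsetP [v vpts ->] vL].
by apply/imsetP; exists v; rewrite // mem_filter vpts (subsetP vL _ (point_of_self v)).
Qed.

Theorem proj_arc_of_forms : proj_arc (size pts) n [set point_of v | v in pts].
Proof.
split.
- move=> _ /imsetP [v /pts_unit [j vj] ->].
  by exists (fun _ => v); split; last exact: point_free vj.
- rewrite card_in_imset; first exact/card_uniqP.
  move=> v w vpts wpts vw; apply/eqP; apply: contraT => /(pts_distinct vpts wpts).
  by rewrite -vw point_of_self.
- by move=> L /count_line_le; apply: leq_trans (points_on_line_le L).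
Qed.
End ArcFromForms.
End Geometry.

(* A verified implementation of the operations of [R], on which the checker below
   runs: [vm_compute] would otherwise rebuild the structure instance of [R] at
   every generic ring operation.  The implementations used are the normal forms of
   the generic operations, computed once by [Eval compute]. *)
Record ring_impl (R : nzRingType) := RingImpl {
  ielems : seq R;
  iadd : R -> R -> R;
  isub : R -> R -> R;
  imul : R -> R -> R;
  ieq : rel R;
  iunit : pred R;
  ielemsP : forall x, x \in ielems;
  iaddE : iadd =2 +%R;
  isubE : isub =2 (fun x y => x - y);
  imulE : imul =2 *%R;
  ieqE : ieq =2 eq_op;
  iunitP : forall x, iunit x -> exists y, y * x = 1 }.

Section Certificate.
Variables (R : finNzRingType) (M : ring_impl R).

Definition vec3 := (R * R * R)%type.
Definition coord (v : vec3) (j : 'I_3) : R :=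
  match val j with 0 => v.1.1 | 1 => v.1.2 | _ => v.2 end.
Definition row3 (v : vec3) : 'rV[R]_3 := \row_j coord v j.
Definition unrow3 (x : 'rV[R]_3) : vec3 := (x 0 ord0, x 0 (@Ordinal 3 1 isT), x 0 ord_max).
(* Enumerations of finite types do not reduce under [vm_compute] (they go through
   opaque proofs), hence the explicit lists here and in [line_forms]. *)
Definition idx3 : seq 'I_3 := [:: ord0; @Ordinal 3 1 isT; ord_max].

Definition unit_coordb (v : vec3) := has (fun j => coord v j == 1) idx3.
Definition indepb (v w : vec3) :=
  has (fun j => ieq M (coord v j) 1 &&
         has (fun k => iunit M (isub M (coord w k) (imul M (coord v k) (coord w j)))) idx3)
      idx3.
Definition incidentb (l v : vec3) :=
  ieq M (iadd M (iadd M (imul M l.1.1 v.1.1) (imul M l.1.2 v.1.2)) (imul M l.2 v.2)) 0.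
Definition on_pointb (w v : vec3) :=
  has (fun c => all (fun j => ieq M (imul M (coord w j) c) (coord v j)) idx3) (ielems M).

(* Any list of forms is sound; for a chain ring of length 2 this one contains
   exactly one form per line: its first unit coordinate is 1. *)
Definition canonical_formb (l : vec3) :=
  if iunit M l.1.1 then l.1.1 == 1 else if iunit M l.1.2 then l.1.2 == 1 else l.2 == 1.
Definition line_forms : seq vec3 :=
  let E := ielems M in
  [seq l <- [seq (ab, c) | ab <- [seq (a, b) | a <- E, b <- E], c <- E] | canonical_formb l].

Definition arc_certificate (n : nat) (pts : seq vec3) : bool :=
  let forms := line_forms in
  [&& uniq pts, all unit_coordb pts,
      all (fun v => all (fun w => [|| v == w, indepb v w | ~~ on_pointb w v]) pts) pts,
      all (fun v => count (predC (indepb v)) pts <= n)%N pts,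
      all (fun v => let forms_v := [seq l <- forms | incidentb l v] in
                    all (fun w => indepb v w ==> has (incidentb^~ w) forms_v) pts) pts
    & all (fun l => count (incidentb l) pts <= n)%N forms].

Lemma row3E v j : row3 v 0 j = coord v j.
Proof. by rewrite mxE. Qed.

Lemma row3K : cancel row3 unrow3.
Proof. by case=> [[a b] c]; rewrite /unrow3 !row3E. Qed.

Lemma unit_coordbP v : unit_coordb v -> exists j, row3 v 0 j = 1.
Proof. by case/hasP => j _ /eqP vj; exists j; rewrite row3E. Qed.

Lemma indepb_free v w : indepb v w -> injective (rcomb (pair2 (row3 v) (row3 w))).
Proof.
case/hasP => j _ /andP [+ /hasP [k _ /iunitP]].
rewrite ieqE isubE imulE => /eqP vj unit_k.
by apply: (pair2_free (j := j) (k := k)); rewrite !row3E.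
Qed.

Lemma incidentbE l v : incidentb l v = (lform (row3 l) (row3 v) == 0).
Proof.
rewrite /incidentb /lform ieqE !iaddE !imulE !big_ord_recl big_ord0 addr0 addrA.
by rewrite !row3E.
Qed.

Lemma on_pointbP w v : row3 v \in point_of (row3 w) -> on_pointb w v.
Proof.
case/point_ofP => c vE; apply/hasP; exists c; first exact: ielemsP.
by apply/allP => j _; rewrite ieqE imulE -!row3E vE !mxE.
Qed.

Lemma arc_certificate_sound n pts : arc_certificate n pts ->
  proj_arc (size pts) n [set point_of v | v in map row3 pts].
Proof.
case/and5P => uniq_pts unit_pts distinct_pts dep_le /andP [cover forms_le].
rewrite -(size_map row3); pose indep x y := indepb (unrow3 x) (unrow3 y).
apply: (proj_arc_of_forms (forms := map row3 line_forms) (indep := indep)).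
- by rewrite map_inj_uniq //; apply: can_inj row3K.
- by move=> _ /mapP [v /(allP unit_pts) /unit_coordbP vj ->].
- move=> _ _ /mapP [v vpts ->] /mapP [w wpts ->] vw.
  case/or3P: (allP (allP distinct_pts v vpts) w wpts) => [/eqP vw' | | ].
  + by rewrite vw' eqxx in vw.
  + by move/indepb_free/pair2_free_notin_point.
  + by apply: contra; apply: on_pointbP.
- by move=> _ _ /mapP [v _ ->] /mapP [w _ ->]; rewrite /indep !row3K; apply: indepb_free.
- move=> _ /mapP [v vpts ->]; rewrite count_map.
  apply: leq_trans (allP dep_le v vpts); apply: sub_count => x.
  by rewrite /= /indep !row3K.
- move=> _ _ /mapP [v vpts ->] /mapP [w wpts ->]; rewrite /indep !row3K => vw.
  have /hasP [l] := implyP (allP (allP cover v vpts) w wpts) vw.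
  rewrite mem_filter => /andP [lv lforms] lw; exists (row3 l); first exact: map_f.
  by move: lv lw; rewrite !incidentbE => /eqP -> /eqP ->.
- move=> _ /mapP [l lforms ->]; rewrite count_map.
  apply: leq_trans (allP forms_le l lforms); apply: sub_count => x.
  by rewrite /= incidentbE.
Qed.
End Certificate.

Lemma unit_by_table (R : nzRingType) (E : seq R) (u : pred R) :
  (forall x, x \in E) -> all (fun x => u x ==> has (fun y => y * x == 1) E) E ->
  forall x, u x -> exists y, y * x = 1.
Proof.
move=> EP /allP unitE x ux; have /hasP [y _ /eqP yx] := implyP (unitE x (EP x)) ux.
by exists y.
Qed.

Definition impl_of (R : nzRingType) (E : seq R) (u : pred R)
    (EP : forall x, x \in E) (uP : forall x, u x -> exists y, y * x = 1) : ring_impl R :=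
  @RingImpl R E +%R (fun x y => x - y) *%R eq_op u EP (rrefl _) (rrefl _) (rrefl _) (rrefl _) uP.

Definition dec3 (R : finNzRingType) (dec : nat -> R) (t : nat * nat * nat) : vec3 R :=
  (dec t.1.1, dec t.1.2, dec t.2).

(* The number [a + 4 b] (a, b < 4) encodes [a + b X]; a digit [k] stands for
   [k mod 2 + (k/2 mod 2) w] in [F_4 = F_2(w)], resp. for [k] in [Z/4Z]. *)
Definition F4_of_nat (k : nat) : F4 := MkF4 (odd k, odd k./2).
Definition S4_of_nat (n : nat) : S4 := MkS4 (F4_of_nat (n %% 4), F4_of_nat (n %/ 4)).
Definition T4_of_nat (n : nat) : T4 := MkT4 (F4_of_nat (n %% 4), F4_of_nat (n %/ 4)).
Definition G4_of_nat (n : nat) : G4 := MkG4 (inZp (n %% 4), inZp (n %/ 4)).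

Definition S4_elems := map S4_of_nat (iota 0 16).
Definition T4_elems := map T4_of_nat (iota 0 16).
Definition G4_elems := map G4_of_nat (iota 0 16).

Lemma S4_elemsP x : x \in S4_elems.
Proof. by case: x => [[[[[] []]] [[[] []]]]]. Qed.

Lemma T4_elemsP x : x \in T4_elems.
Proof. by case: x => [[[[[] []]] [[[] []]]]]. Qed.

Lemma G4_elemsP x : x \in G4_elems.
Proof. by case: x => [[[[|[|[|[|//]]]] ?] [[|[|[|[|//]]]] ?]]]; vm_compute. Qed.

(* Elements outside the maximal ideal, generated by [X] resp. by [2]. *)
Definition S4_unit (x : S4) := let: MkS4 (MkF4 (a0, a1), _) := x in a0 || a1.
Definition T4_unit (x : T4) := let: MkT4 (MkF4 (a0, a1), _) := x in a0 || a1.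
Definition G4_unit (x : G4) := let: MkG4 (a, b) := x in odd a || odd b.

Lemma S4_unitP x : S4_unit x -> exists y, y * x = 1.
Proof. by move: x; apply: unit_by_table S4_elemsP _; vm_compute. Qed.

Lemma T4_unitP x : T4_unit x -> exists y, y * x = 1.
Proof. by move: x; apply: unit_by_table T4_elemsP _; vm_compute. Qed.

Lemma G4_unitP x : G4_unit x -> exists y, y * x = 1.
Proof. by move: x; apply: unit_by_table G4_elemsP _; vm_compute. Qed.

Definition S4_impl := Eval compute in impl_of S4_elemsP S4_unitP.
Definition T4_impl := Eval compute in impl_of T4_elemsP T4_unitP.
Definition G4_impl := Eval compute in impl_of G4_elemsP G4_unitP.

Definition S4_arc : seq (vec3 S4) := map (dec3 S4_of_nat)
  [:: (0,0,1); (8,1,11); (1,14,11); (1,7,13); (1,8,13); (0,4,1); (0,1,7); (1,2,15); (1,11,13); (1,8,1); (0,12,1); (12,1,3); (1,6,7); (1,15,13); (1,8,5); (0,1,0); (1,8,2); (8,1,14); (1,13,5); (1,12,4); (0,1,8); (1,12,14); (4,1,14); (1,5,5); (1,12,8); (0,1,12); (1,0,6); (12,1,14); (1,1,5); (1,12,0); (0,1,1); (1,7,4); (1,13,2); (1,14,9); (1,0,11); (0,1,9); (1,3,8); (1,9,10); (1,2,9); (1,0,3); (0,1,2); (1,1,1); (1,0,8); (4,1,0); (1,4,2); (0,1,6); (1,13,9); (1,4,0); (12,1,8); (1,4,14); (0,1,10); (1,5,13); (1,8,4); (8,1,12); (1,4,6); (4,0,1); (8,1,7); (1,6,15); (1,3,5);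 (1,0,13); (4,8,1); (4,1,3); (1,2,7); (1,7,5); (1,0,9); (4,1,12); (1,12,6); (4,1,2); (1,13,1); (1,0,12); (4,1,1); (1,11,4); (1,9,2); (1,6,5); (1,4,3); (4,1,5); (1,7,12); (1,5,6); (1,14,5); (1,4,7); (4,1,13); (1,3,0); (1,1,14); (1,2,5); (1,4,15); (4,1,7); (1,14,15); (1,15,9); (1,12,9); (12,8,1); (4,1,11); (1,6,11); (1,11,1); (1,4,9); (8,8,1); (8,12,1); (12,1,7); (1,10,15); (1,7,1); (1,4,5); (8,1,4); (1,0,10); (12,1,10); (1,13,13); (1,8,8); (8,1,8); (1,8,14); (8,1,10); (1,1,13); (1,8,12); (8,1,1); (1,3,4); (1,5,2); (1,2,13); (1,8,7); (8,1,5); (1,15,12); (1,9,6); (1,10,13); (1,8,3); (8,1,3); (1,10,7); (1,11,9); (1,12,13); (12,0,1); (12,12,1); (12,1,11); (1,2,11); (1,3,9); (1,12,5); (12,1,0); (1,0,2); (12,1,6); (1,5,9); (1,4,12); (12,1,9); (1,11,8); (1,5,10); (1,6,1); (1,12,7); (12,1,13); (1,7,0); (1,9,14); (1,14,1); (1,12,3); (1,1,3); (1,1,7); (1,13,11); (1,9,3); (1,9,11); (1,13,7); (1,5,4); (1,11,2); (1,11,3); (1,2,4); (1,10,2); (1,5,8); (1,3,6); (1,7,3); (1,10,12); (1,14,10); (1,5,12); (1,15,14); (1,3,3); (1,6,0); (1,6,6); (1,9,0); (1,15,10); (1,7,15); (1,6,4); (1,14,2); (1,9,4); (1,3,2); (1,3,15);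 (1,10,8); (1,6,14); (1,9,8); (1,11,6); (1,15,15); (1,2,0); (1,2,6); (1,9,12); (1,7,14); (1,11,15); (1,14,12); (1,10,10); (1,13,0); (1,3,10); (1,11,11); (1,10,0); (1,10,6); (1,13,8); (1,7,6); (1,3,11); (1,14,4); (1,6,2); (1,13,12); (1,11,14); (1,7,11); (1,2,8); (1,14,14)].

Definition T4_arc : seq (vec3 T4) := map (dec3 T4_of_nat)
  [:: (0,8,1); (1,10,5); (1,8,12); (1,13,12); (1,3,5); (0,12,1); (1,6,9); (1,0,4); (1,5,4); (1,15,9); (0,1,4); (1,0,3); (1,3,3); (1,6,11); (1,13,11); (0,1,1); (0,1,5); (12,1,13); (4,1,13); (12,1,5); (0,1,2); (1,13,10); (1,1,9); (1,8,1); (1,8,14); (0,1,10); (1,9,14); (1,13,5); (1,4,13); (1,12,10); (0,1,6); (1,1,6); (1,9,1); (1,0,9); (1,4,2); (0,1,14); (1,5,2); (1,5,13); (1,12,5); (1,0,6); (0,1,3); (1,15,4); (1,2,14); (1,3,6); (1,2,4); (0,1,15); (1,7,12); (1,6,10); (1,7,2); (1,10,12); (0,1,7); (1,3,8); (1,10,6); (1,11,14); (1,14,8); (0,1,11); (1,11,0); (1,14,2); (1,15,10); (1,6,0); (4,0,1); (1,6,13); (1,12,12); (1,1,4); (1,3,1); (4,4,1); (1,10,1); (1,4,4); (1,9,12); (1,15,13); (4,8,1); (1,2,9); (1,0,0); (1,13,8); (1,7,5); (4,12,1); (1,14,5); (1,8,8); (1,5,0); (1,11,9); (4,1,8); (1,4,3);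 (1,7,3); (1,2,11); (1,9,11); (4,1,12); (1,8,15); (1,15,11); (1,10,3); (1,5,7); (4,1,1); (4,1,3); (1,7,4); (1,6,2); (1,3,14); (1,2,12); (4,1,15); (1,15,12); (1,2,6); (1,7,10); (1,10,4); (8,1,0); (1,8,3); (1,11,3); (1,14,11); (1,5,11); (8,1,8); (1,12,7); (1,7,15); (1,2,7); (1,1,15); (8,1,12); (1,0,11); (1,15,7); (1,10,15); (1,13,3); (8,1,2); (1,13,14); (1,5,9); (1,8,5); (1,0,2); (8,1,10); (1,9,10); (1,9,5); (1,4,9); (1,4,6); (8,1,6); (1,1,2); (1,13,1); (1,0,13); (1,12,14); (8,1,14); (1,5,6); (1,1,13); (1,12,1); (1,8,10); (8,1,3); (1,3,4); (1,10,10); (1,3,10); (1,2,8); (8,1,15); (1,11,12); (1,14,14); (1,7,14); (1,10,0); (8,1,7); (1,15,8); (1,2,2); (1,11,2); (1,14,4); (8,1,11); (1,7,0); (1,6,6); (1,15,6); (1,6,12); (12,0,1); (1,10,9); (1,0,8); (1,1,12); (1,11,1); (12,4,1); (1,6,5); (1,8,0); (1,9,4); (1,7,13); (12,8,1); (1,14,13); (1,12,4); (1,13,0); (1,15,5); (12,12,1); (1,2,1); (1,4,12); (1,5,8); (1,3,9); (12,1,4); (1,8,7); (1,3,15); (1,6,7); (1,5,15); (12,1,8); (1,0,15); (1,7,11); (1,2,3); (1,13,7); (12,1,12); (1,12,3); (1,15,3); (1,10,11); (1,1,11); (12,1,6); (1,1,14); (1,1,1); (1,0,1); (1,8,6); (12,1,14);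 (1,5,10); (1,13,13); (1,12,13); (1,12,2)].

Definition G4_arc : seq (vec3 G4) := map (dec3 G4_of_nat)
  [:: (0,1,4); (1,11,10); (1,6,12); (10,1,1); (1,4,0); (1,11,6); (0,1,8); (0,1,12); (1,3,10); (1,4,12); (10,1,3); (1,6,0); (1,3,6); (0,1,5); (1,0,2); (1,0,6); (8,1,15); (1,10,10); (1,0,14); (0,1,9); (1,6,8); (1,11,14); (2,1,6); (1,3,2); (1,6,4); (0,1,13); (1,2,2); (1,8,6); (8,1,13); (1,2,10); (1,2,14); (0,1,6); (1,1,10); (1,12,12); (10,1,9); (1,14,0); (1,1,6); (0,1,3); (1,14,8); (1,9,14); (2,1,12); (1,1,2); (1,14,4); (0,1,11); (1,4,8); (1,3,14); (2,1,14); (1,11,2); (1,4,4); (0,1,15); (1,10,2); (1,10,6); (8,1,5); (1,0,10); (1,10,14); (0,2,1); (1,5,0); (1,15,4); (10,2,1); (1,15,8); (1,5,12); (0,10,1); (1,15,0); (1,5,4); (10,10,1); (1,5,8); (1,15,12); (8,0,1); (1,5,10); (1,15,6); (8,8,1); (1,15,10); (1,5,6); (8,1,0); (2,1,2); (2,1,10); (8,1,10); (10,1,2); (10,1,0); (8,1,4); (1,1,8); (1,4,6); (2,1,1); (1,14,10); (1,3,4); (8,1,1); (1,6,2); (1,9,12); (10,1,4); (1,3,0); (1,14,14); (8,1,6); (1,11,8); (1,14,6); (2,1,9); (1,4,10); (1,9,4); (8,1,14); (1,3,8); (1,12,6); (2,1,11); (1,6,10); (1,1,4); (8,1,3); (1,4,2);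 (1,1,12); (10,1,12); (1,11,0); (1,12,14); (8,1,11); (1,14,2); (1,11,12); (10,1,14); (1,1,0); (1,6,14); (1,0,0); (1,2,12); (10,1,15); (1,10,0); (1,8,12); (10,1,5); (1,0,4); (2,1,13); (1,2,8); (1,0,8); (1,8,4); (2,1,15); (1,10,8); (1,2,4); (2,1,5); (1,0,1); (1,4,5); (1,6,9); (1,8,7); (1,9,1); (1,9,5); (1,0,13); (1,9,9); (1,3,7); (1,2,3); (1,4,13); (1,12,3); (1,0,3); (1,14,13); (1,4,3); (1,8,13); (1,3,9); (1,1,7); (1,0,7); (1,3,1); (1,11,5); (1,2,1); (1,14,5); (1,14,9); (1,4,9); (1,2,7); (1,1,1); (1,1,5); (1,10,1); (1,6,5); (1,8,1); (1,12,5); (1,12,9); (1,10,7); (1,11,1); (1,3,5); (1,8,3); (1,6,13); (1,14,3); (1,10,13); (1,1,9); (1,11,7); (1,12,13); (1,6,3); (1,2,13); (1,11,9); (1,9,7); (1,10,3); (1,5,9); (1,13,7); (1,15,9); (1,15,7); (1,13,9); (1,5,7); (1,5,2); (1,15,14); (2,0,1); (1,15,2); (1,5,14); (2,8,1); (1,2,0); (1,10,12); (10,1,13); (1,7,1); (1,7,5); (1,7,11); (1,7,15); (1,7,3); (1,7,13); (1,7,9); (1,7,7)].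

Lemma S4_arc_certified : arc_certificate S4_impl 13 S4_arc.
Proof. by vm_compute. Qed.

Lemma T4_arc_certified : arc_certificate T4_impl 13 T4_arc.
Proof. by vm_compute. Qed.

Lemma G4_arc_certified : arc_certificate G4_impl 13 G4_arc.
Proof. by vm_compute. Qed.

Theorem theorem3p8 :
  (exists A : {set {set 'rV[G4]_3}}, proj_arc 201 13 A) /\
  (exists A : {set {set 'rV[S4]_3}}, proj_arc 201 13 A) /\
  (exists A : {set {set 'rV[T4]_3}}, proj_arc 201 13 A).
Proof.
split; [|split]; eexists.
- exact: arc_certificate_sound G4_arc_certified.
- exact: arc_certificate_sound S4_arc_certified.
- exact: arc_certificate_sound T4_arc_certified.
Qed.
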